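(* Let $(X,*,0)$ be a KU-algebra, let $d: X \to X$ be a self map, and let $\mu, \beta: X \to [0,1]$ be fuzzy left derivations KU-ideals of $X$ (with respect to $d$). Then the Cartesian product $\mu \times \beta: X \times X \to [0,1]$, $(\mu\times\beta)(x,y) = \min\{\mu(x), \beta(y)\}$, is a fuzzy left derivations KU-ideal of the KU-algebra $X \times X$ with respect to the self map $D(x,y) = (d(x), d(y))$.
   Context: A KU-algebra is a set $X$ with a binary operation $*$ and a constant $0$ such that for all $x,y,z \in X$: (KU1) $(x*y)*[(y*z)*(x*z)] = 0$; (KU2) $x*0 = 0$; (KU3) $0*x = x$; (KU4) $x*y = 0 = y*x$ implies $x = y$. The product $X \times X$ is a KU-algebra with operation $(x,y)*(u,v) = (x*u, y*v)$ and constant $(0,0)$. Given a KU-algebra $Y$ with constant $0_Y$ and a self map $D: Y \to Y$, a fuzzy set $\nu: Y \to [0,1]$ is a fuzzy left derivations KU-ideal of $Y$ if (F1) $\nu(0_Y) \ge \nu(a)$ for all $a \in Y$, and (FL2) $\nu(D(a*c)) \ge \min\{\nu(D(a)*(b*c)), \nu(D(b))\}$ for all $a,b,c \in Y$. The paper writes $d(x,y)$ for the self map of $X\times X$ induced by $d$, i.e. $(d(x),d(y))$. *)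

From Stdlib Require Import Reals.
Open Scope R_scope.

Definition is_KU_algebra {X : Type} (op : X -> X -> X) (z : X) : Prop :=
  (forall x y w, op (op x y) (op (op y w) (op x w)) = z) /\
  (forall x, op x z = z) /\
  (forall x, op z x = x) /\
  (forall x y, op x y = z -> op y x = z -> x = y).

Definition prod_op {X : Type} (op : X -> X -> X) (p q : X * X) : X * X :=
  (op (fst p) (fst q), op (snd p) (snd q)).

Definition is_fuzzy_set {Y : Type} (nu : Y -> R) : Prop :=
  forall a, 0 <= nu a <= 1.

Definition fuzzy_left_derivation_KU_ideal {Y : Type} (op : Y -> Y -> Y) (z : Y)
  (D : Y -> Y) (nu : Y -> R) : Prop :=
  is_fuzzy_set nu /\
  (forall a, nu z >= nu a) /\
  (forall a b c, nu (D (op a c)) >= Rmin (nu (op (D a) (op b c))) (nu (D b))).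

Definition fuzzy_prod {X : Type} (mu beta : X -> R) (p : X * X) : R :=
  Rmin (mu (fst p)) (beta (snd p)).

Definition prod_map {X : Type} (d : X -> X) (p : X * X) : X * X :=
  (d (fst p), d (snd p)).

From Stdlib Require Import Reals Lra.
Open Scope R_scope.

Lemma Rmin_le_compat (a b c e : R) : a <= c -> b <= e -> Rmin a b <= Rmin c e.
Proof. intros Hac Hbe; unfold Rmin; repeat destruct (Rle_dec _ _); lra. Qed.

Lemma Rmin_min4 (a b c e : R) :
  Rmin (Rmin a b) (Rmin c e) = Rmin (Rmin a c) (Rmin b e).
Proof. unfold Rmin; repeat destruct (Rle_dec _ _); lra. Qed.

Section FuzzyProduct.

Context {X : Type} {op : X -> X -> X} {z : X} {d : X -> X} {mu beta : X -> R}.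

Lemma is_fuzzy_set_prod :
  is_fuzzy_set mu -> is_fuzzy_set beta -> is_fuzzy_set (fuzzy_prod mu beta).
Proof.
  intros Hmu Hbeta [a b]; unfold fuzzy_prod; simpl.
  destruct (Hmu a), (Hbeta b); unfold Rmin; destruct (Rle_dec _ _); lra.
Qed.

Lemma fuzzy_prod_zero_max :
  (forall a, mu z >= mu a) -> (forall b, beta z >= beta b) ->
  forall p, fuzzy_prod mu beta (z, z) >= fuzzy_prod mu beta p.
Proof.
  intros Hmu Hbeta [a b]; unfold fuzzy_prod; simpl.
  apply Rle_ge, Rmin_le_compat; apply Rge_le; auto.
Qed.

Lemma fuzzy_prod_left_derivation :
  (forall a b c, mu (d (op a c)) >= Rmin (mu (op (d a) (op b c))) (mu (d b))) ->
  (forall a b c, beta (d (op a c)) >= Rmin (beta (op (d a) (op b c))) (beta (d b))) ->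
  forall p q r : X * X,
    fuzzy_prod mu beta (prod_map d (prod_op op p r)) >=
    Rmin (fuzzy_prod mu beta (prod_op op (prod_map d p) (prod_op op q r)))
         (fuzzy_prod mu beta (prod_map d q)).
Proof.
  intros Hmu Hbeta [a1 a2] [b1 b2] [c1 c2].
  unfold fuzzy_prod, prod_map, prod_op; simpl.
  rewrite Rmin_min4.
  apply Rle_ge, Rmin_le_compat; apply Rge_le; auto.
Qed.

End FuzzyProduct.

Theorem theorem5p12 (X : Type) (op : X -> X -> X) (z : X) (d : X -> X)
  (mu beta : X -> R) :
  is_KU_algebra op z ->
  fuzzy_left_derivation_KU_ideal op z d mu ->
  fuzzy_left_derivation_KU_ideal op z d beta ->
  fuzzy_left_derivation_KU_ideal (prod_op op) (z, z) (prod_map d)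
    (fuzzy_prod mu beta).
Proof.
  intros _ [Fmu [Zmu Dmu]] [Fbeta [Zbeta Dbeta]].
  split; [| split].
  - exact (is_fuzzy_set_prod Fmu Fbeta).
  - exact (fuzzy_prod_zero_max Zmu Zbeta).
  - exact (fuzzy_prod_left_derivation Dmu Dbeta).
Qed.
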